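(* Let $\sigma$ be a valid composite state of $\mathcal{M}uddy\mathcal{P}uzzle$ reachable by a valid trace from a composite initial state $\sigma^0$ with $\mathbf{consistent}(\sigma^0)$, and suppose $\sigma\notin S_F$. Then there exist a component $i$ and a valid transition (labeled $(i,l)$ for some $l$) from $\sigma$ to a state $\sigma'$ such that $\mathit{round}(\sigma'_i)>\mathit{round}(\sigma_i)$.
   Context: Fix $n \ge 1$ children indexed $1,\dots,n$. A message is a triple $\langle j, r, s\rangle$ with $j \in \{1,\dots,n\}$ (the sender), $r \in \mathbb{N}$ (a round number) and $s \in \{u,m,c\}$ (epistemic status: $u$ = ''does not know own status'', $m$ = ''knows they are muddy'', $c$ = ''knows they are clean''); $\bot$ denotes ''no message''. Child $i$ is a VLSM $\mathcal{C}_i$ with labels $\{\mathit{init},\mathit{emit},\mathit{receive}\}$, no initial messages, initial states $\langle \mathit{Obs}\rangle$ with $\mathit{Obs}\subseteq\{1,\dots,n\}$, and running states $\langle \mathit{Obs}, r, s\rangle$ with $\mathit{Obs}\subseteq\{1,\dots,n\}$, $r\in\mathbb{N}$, $s\in\{u,m,c\}$; $\mathit{Obs}(\cdot)$ denotes the observation set of either kind of state. Transitions $\tau_i$ and local validity $\beta_i$: - init: enabled only on an initial state $\langle\mathit{Obs}\rangle$ with input $\bot$; goes to $\langle \mathit{Obs},0,u\rangle$ if $\mathit{Obs}\ne\emptyset$ and to $\langle\mathit{Obs},0,m\rangle$ if $\mathit{Obs}=\emptyset$; output $\bot$. - emit: enabled only on a running state $\langle\mathit{Obs},r,s\rangle$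 with input $\bot$; state unchanged, output $\langle i,r,s\rangle$. - receive: on a running state $\langle\mathit{Obs},r,s\rangle$ with input message $\langle j,r',s'\rangle$, output $\bot$, new state given by the first applicable case: (R1) $s\in\{m,c\}$: unchanged. Otherwise $s=u$ and: (R2) $s'=c$, $j\notin\mathit{Obs}$, $r'=|\mathit{Obs}|$: $\langle\mathit{Obs},r',c\rangle$; (R3) $s'=c$, $j\notin\mathit{Obs}$, $r'=|\mathit{Obs}|+1$: $\langle\mathit{Obs},r'-1,m\rangle$; (R4) $s'=m$, $j\in\mathit{Obs}$, $r'=|\mathit{Obs}|$: $\langle\mathit{Obs},r',m\rangle$; (R5) $s'=m$, $j\in\mathit{Obs}$, $r'=|\mathit{Obs}|-1$: $\langle\mathit{Obs},r'+1,c\rangle$; (R6) $s'=u$, $j\in\mathit{Obs}$, $r'<r$: unchanged; (R7) $s'=u$, $j\in\mathit{Obs}$, $r\le r'<|\mathit{Obs}|-1$: $\langle\mathit{Obs},r'+1,u\rangle$; (R8) $s'=u$, $j\in\mathit{Obs}$, $r'=|\mathit{Obs}|-1$: $\langle\mathit{Obs},r'+1,m\rangle$; (R9) $s'=u$, $j\notin\mathit{Obs}$, $r'\le r$: unchanged; (R10) $s'=u$, $j\notin\mathit{Obs}$, $r<r'<|\mathit{Obs}|$: $\langle\mathit{Obs},r',u\rangle$; (R11) $s'=u$, $j\notin\mathit{Obs}$, $r'=|\mathit{Obs}|$: $\langle\mathit{Obs},r',m\rangle$. $\beta_i$ for receive holds exactly when one of (R1)–(R11) applies. Composition $\mathcal{M}uddy\mathcal{P}uzzle=(\mathcal{C}_1+\dots+\mathcal{C}_n)|_\varphi$: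 composite states are tuples $\sigma=(\sigma_1,\dots,\sigma_n)$; composite initial states ($S_0$) are those with every component initial; labels are pairs $(i,l)$; transition $(i,l)$ with input $\mu$ applies $\tau_i(l,\sigma_i,\mu)$ to component $i$, leaves the others unchanged, and is allowed iff $\beta_i(l,\sigma_i,\mu)\wedge\varphi((i,l),\sigma,\mu)$. For a composite state $\sigma$ let $M=\bigcup_{i}\mathit{Obs}(\sigma_i)$; $\mathbf{consistent}(\sigma)$ means $M\ne\emptyset$ and $\mathit{Obs}(\sigma_i)=M\setminus\{i\}$ for all $i$. The composition constraint: $\varphi((i,\mathit{init}),\sigma,\mu)=\mathbf{consistent}(\sigma)$; $\varphi((i,\mathit{emit}),\sigma,\mu)=\text{true}$; $\varphi((i,\mathit{receive}),\sigma,\langle j,r',s'\rangle)$ holds iff $\sigma_j$ is a running state $\langle \mathit{Obs}_j,r_j,s_j\rangle$ and $(s'=s_j\wedge r'=r_j)\vee(s'=u\wedge r'<r_j)$. Validity (VLSM sense): a transition is constrained if its input satisfies the constraint. Valid traces and valid messages are defined by simultaneous induction: a valid trace is a finite sequence of constrained transitions starting in a composite initial state in which every input message is either $\bot$ or a valid message; a valid message is one output by some transition of some valid trace. A valid state is one reachable by a valid trace; a valid transition is a constrained transition from a valid state whose input is $\bot$ or a valid message. $S_V$ is the set of valid states. The set of final states is $S_F=\{\sigma\in S_V \mid$ every component $\sigma_i$ is a running state with status $\ne u\}$. For a child state, $\mathit{round}(\langle\mathit{Obs}\rangle)=-1$ and $\mathit{round}(\langle\mathit{Obs},r,s\rangle)=r$.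 *)

(* Children are indexed by 'I_n (i.e. 0..n-1 instead of 1..n). *)
From mathcomp Require Import all_boot all_order all_algebra.
Set Implicit Arguments. Unset Strict Implicit. Unset Printing Implicit Defensive.
Import Order.TTheory GRing.Theory Num.Theory.

(* epistemic status: U = u (unknown), Mu = m (muddy), Cl = c (clean) *)
Inductive status := U | Mu | Cl.

Definition status_eqb (a b : status) : bool :=
  match a, b with U, U | Mu, Mu | Cl, Cl => true | _, _ => false end.

Definition msg (n : nat) : Type := ('I_n * nat * status)%type.

Inductive cstate (n : nat) : Type :=
| Init of {set 'I_n}
| Run of {set 'I_n} & nat & status.

Definition Obs n (st : cstate n) : {set 'I_n} :=
  match st with Init Ob => Ob | Run Ob _ _ => Ob end.

Inductive label := Linit | Lemit | Lreceive.

(* receive on a running state <Ob, r, s> with input <j, r', s'>;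
   None means that none of (R1)-(R11) applies (beta fails) *)
Definition recv n (Ob : {set 'I_n}) (r : nat) (s : status) (j : 'I_n)
  (r' : nat) (s' : status) : option (cstate n) :=
  match s with
  | Mu | Cl => Some (Run Ob r s)
  | U =>
    let k := #|Ob| in
    match s' with
    | Cl =>
      if (j \notin Ob) && (r' == k) then Some (Run Ob r' Cl)
      else if (j \notin Ob) && (r' == k.+1) then Some (Run Ob (r' - 1) Mu)
      else None
    | Mu =>
      if (j \in Ob) && (r' == k) then Some (Run Ob r' Mu)
      else if (j \in Ob) && (r'.+1 == k) then Some (Run Ob r'.+1 Cl)
      else None
    | U =>
      if j \in Ob then
        if r' < r then Some (Run Ob r U)
        else if (r <= r') && (r'.+1 < k) then Some (Run Ob r'.+1 U)
        else if r'.+1 == k then Some (Run Ob r'.+1 Mu)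
        else None
      else
        if r' <= r then Some (Run Ob r U)
        else if (r < r') && (r' < k) then Some (Run Ob r' U)
        else if r' == k then Some (Run Ob r' Mu)
        else None
    end
  end.

(* tau_i restricted to inputs where beta_i holds; None = beta_i fails *)
Definition child_step n (i : 'I_n) (l : label) (st : cstate n)
  (mu : option (msg n)) : option (cstate n * option (msg n)) :=
  match l, st, mu with
  | Linit, Init Ob, None => Some (Run Ob 0 (if Ob == set0 then Mu else U), None)
  | Lemit, Run Ob r s, None => Some (st, Some (i, r, s))
  | Lreceive, Run Ob r s, Some (j, r', s') =>
      match recv Ob r s j r' s' with
      | Some st' => Some (st', None)
      | None => None
      end
  | _, _, _ => None
  end.

Definition cstateV (n : nat) : Type := 'I_n -> cstate n.

Definition initialV n (sg : cstateV n) : Prop :=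
  forall i, exists Ob, sg i = Init Ob.

Definition bigM n (sg : cstateV n) : {set 'I_n} := \bigcup_(i < n) Obs (sg i).

Definition consistent n (sg : cstateV n) : bool :=
  (bigM sg != set0) && [forall i, Obs (sg i) == bigM sg :\ i].

Definition phi n (sg : cstateV n) (i : 'I_n) (l : label) (mu : option (msg n)) : bool :=
  match l with
  | Linit => consistent sg
  | Lemit => true
  | Lreceive =>
    match mu with
    | Some (j, r', s') =>
      match sg j with
      | Run _ rj sj => (status_eqb s' sj && (r' == rj)) || (status_eqb s' U && (r' < rj))
      | Init _ => false
      end
    | None => false
    end
  end.

Definition upd n (sg : cstateV n) (i : 'I_n) (st : cstate n) : cstateV n :=
  fun k => if k == i then st else sg k.

(* composite transition (i,l) with input mu; None = not allowed
   (beta_i /\ phi fails) *)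
Definition comp_step n (sg : cstateV n) (i : 'I_n) (l : label) (mu : option (msg n))
  : option (cstateV n * option (msg n)) :=
  match child_step i l (sg i) mu with
  | Some (st', o) => if phi sg i l mu then Some (upd sg i st', o) else None
  | None => None
  end.

(* valid_sm s o : s is reachable by a valid trace whose last output is o
   (simultaneous induction of valid states/traces and valid messages) *)
Inductive valid_sm n : cstateV n -> option (msg n) -> Prop :=
| vsm_init sg : initialV sg -> valid_sm sg None
| vsm_step sg o_sg mu i l sg' o :
    valid_sm sg o_sg ->
    (mu = None \/ exists sm, valid_sm sm mu) ->
    comp_step sg i l mu = Some (sg', o) ->
    valid_sm sg' o.

Definition valid_message n (m : msg n) : Prop := exists sm, valid_sm sm (Some m).

Definition valid_input n (mu : option (msg n)) : Prop :=
  match mu with None => True | Some m => valid_message m end.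

Definition valid_state n (sg : cstateV n) : Prop := exists o, valid_sm sg o.

Inductive reach n (s0 : cstateV n) : cstateV n -> Prop :=
| reach_refl : initialV s0 -> reach s0 s0
| reach_step sg mu i l sg' o :
    reach s0 sg -> valid_input mu ->
    comp_step sg i l mu = Some (sg', o) -> reach s0 sg'.

Definition in_SF n (sg : cstateV n) : Prop :=
  valid_state sg /\
  forall i, exists Ob r s, sg i = Run Ob r s /\ s <> U.

Definition round n (st : cstate n) : int :=
  match st with Init _ => (-1)%R | Run _ r _ => (r%:Z)%R end.

From mathcomp Require Import all_boot all_order all_algebra zify.
Import Order.TTheory GRing.Theory Num.Theory.
Set Implicit Arguments. Unset Strict Implicit. Unset Printing Implicit Defensive.

(* Let M be the set of muddy children.  Along any valid trace from a consistent
   initial state every child observes exactly M minus itself, an undecided child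
   is at a round below the number of muddy children it sees, and a decided child
   is at that round and is right.  So if the state is not final, either some
   child is still initial (and the unchanged observations keep the state
   consistent, so it may init), or there is an undecided child i; choosing one of
   minimal round r, it sees some muddy j, and j's current message (which j may
   emit, so it is valid) is decided or undecided at a round >= r: in every case
   receiving it moves i beyond round r. *)

Section Soundness.
Variables (n : nat) (M : {set 'I_n}).

(* [M] plays the set of muddy children, i.e. [bigM] of a consistent initial state. *)
Definition sound_status (x : 'I_n) (r : nat) (st : status) : bool :=
  match st with
  | U => r < #|M :\ x|
  | Mu => (r == #|M :\ x|) && (x \in M)
  | Cl => (r == #|M :\ x|) && (x \notin M)
  end.

Definition sound_child (x : 'I_n) (c : cstate n) : bool :=
  match c with
  | Init Ob => Ob == M :\ x
  | Run Ob r st => (Ob == M :\ x) && sound_status x r st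
  end.

Lemma sound_status_round x r st : sound_status x r st -> r <= #|M :\ x|.
Proof. by case: st => /=; [move/ltnW | case/andP=> /eqP-> | case/andP=> /eqP->]. Qed.

(* #|M :\ i| and #|M :\ j| differ according to whether i and j are muddy; with
   that, each case of [recv] is arithmetic.  The case j = i is included. *)
Lemma recv_sound i j r st r' s' c :
  sound_status i r st -> sound_status j r' s' ->
  recv (M :\ i) r st j r' s' = Some c -> sound_child i c.
Proof.
move=> Hi Hj; suff: oapp (sound_child i) true (recv (M :\ i) r st j r' s').
  by move=> + Hc; rewrite Hc.
case: st Hi => /= Hi; rewrite ?eqxx //.
have Ci : #|M| = (i \in M) + #|M :\ i| := cardsD1 i M.
have Cj : #|M| = (j \in M) + #|M :\ j| := cardsD1 j M.
rewrite /recv in_setD1.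
case: (eqVneq j i) Hj Cj => [-> | _] Hj Cj;
  case Ha: (i \in M) Ci; case Hb: (j \in M) Cj; move: Hj;
  case: s' => /=; rewrite ?Hb => Hj Cj Ci.
all: repeat case: ifP => ?; rewrite /= ?eqxx ?Ha /=; lia.
Qed.

Lemma sound_status_init i :
  M != set0 -> sound_status i 0 (if M :\ i == set0 then Mu else U).
Proof.
have Ci : #|M| = (i \in M) + #|M :\ i| := cardsD1 i M.
rewrite -card_gt0; case: eqP => [E | /eqP N] /= M0; last by rewrite card_gt0.
by rewrite E cards0 eqxx /=; move: Ci M0; rewrite E cards0; case: (i \in M) => //=; lia.
Qed.

Lemma status_eqbP a b : reflect (a = b) (status_eqb a b).
Proof. by apply: (iffP idP); case: a; case: b. Qed.

(* The receiver gets either the sender's current status or an outdated u-message;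
   both are sound because a child's round never exceeds the number it observes. *)
Lemma sound_status_message j rj sj r' s' :
  sound_status j rj sj ->
  (status_eqb s' sj && (r' == rj)) || (status_eqb s' U && (r' < rj)) ->
  sound_status j r' s'.
Proof.
move=> Hj /orP[/andP[/status_eqbP-> /eqP-> //] | /andP[/status_eqbP-> lt_r'rj]].
exact: leq_trans lt_r'rj (sound_status_round Hj).
Qed.

Lemma recv_undecided_progress i j r rj sj :
  r < #|M :\ i| -> j \in M :\ i -> sound_status j rj sj -> (sj = U -> r <= rj) ->
  exists r2 st2, recv (M :\ i) r U j rj sj = Some (Run (M :\ i) r2 st2) /\ r < r2.
Proof.
have Ci : #|M| = (i \in M) + #|M :\ i| := cardsD1 i M.
have Cj : #|M| = (j \in M) + #|M :\ j| := cardsD1 j M.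
move=> Hr jOb; have /setD1P[_ jM] := jOb.
case: sj => /= Hj Hle;
  [move: (Hle erefl) => {}Hle | rewrite jM andbT in Hj | by rewrite jM andbF in Hj].
all: rewrite /recv jOb; rewrite jM in Cj; case: (i \in M) Ci => Ci.
all: set ki := #|M :\ i| in Hr Ci *; set kj := #|M :\ j| in Hj Cj; set m := #|M| in Ci Cj.
all: repeat case: ifP => [? | /negbT ?]; try by do 2 eexists; split; [reflexivity | lia].
all: lia.
Qed.

Definition sound_config (s : cstateV n) : Prop := forall x, sound_child x (s x).

Lemma sound_config_Obs s x : sound_config s -> Obs (s x) = M :\ x.
Proof. by move/(_ x); case: (s x) => [Ob /eqP | Ob r st /andP[/eqP]]. Qed.

Lemma child_step_sound s i l mu c o :
  M != set0 -> sound_config s -> phi s i l mu ->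
  child_step i l (s i) mu = Some (c, o) -> sound_child i c.
Proof.
move=> M0 sound_s; have := sound_s i.
case: l; case: (s i) => [Ob | Ob r st]; case: mu => [[[j r'] s']|] //=.
- by move=> /eqP-> _ [<- _]; rewrite /= eqxx sound_status_init.
- by move=> + _ [<- _].
move=> /andP[/eqP-> Hi]; case Hsj: (s j) => [// | Obj rj sj] Hphi.
case Hrecv: recv => [c' |] // [<- _].
have := sound_s j; rewrite Hsj => /andP[_ Hj].
exact: recv_sound Hi (sound_status_message Hj Hphi) Hrecv.
Qed.

Lemma comp_step_sound s i l mu s' o :
  M != set0 -> sound_config s -> comp_step s i l mu = Some (s', o) -> sound_config s'.
Proof.
move=> M0 sound_s; rewrite /comp_step.
case Hc: child_step => [[c o'] |] //; case Hphi: phi => //; case=> <- _ x.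
rewrite /upd; case: eqP => [-> | _]; last exact: sound_s.
exact: child_step_sound M0 sound_s Hphi Hc.
Qed.

End Soundness.

Lemma consistent_sound_config n (s0 : cstateV n) :
  initialV s0 -> consistent s0 -> sound_config (bigM s0) s0.
Proof.
move=> init0 /andP[_ /forallP cons0] x.
by have [Ob sx] := init0 x; move: (cons0 x); rewrite sx.
Qed.

Lemma reach_sound n (s0 s : cstateV n) :
  consistent s0 -> reach s0 s -> sound_config (bigM s0) s /\ valid_state s.
Proof.
move=> cons0; have /andP[M0 _] := cons0.
elim=> [init0 | sg mu i l sg' o _ [sound_sg [o' valid_sg]] valid_mu step].
  by split; [exact: consistent_sound_config | exists None; exact: vsm_init].
split; first exact: comp_step_sound M0 sound_sg step.
exists o; apply: vsm_step valid_sg _ step.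
by case: mu valid_mu => [m|] /=; [right | left].
Qed.

Lemma consistent_eq_Obs n (s s' : cstateV n) :
  (forall x, Obs (s x) = Obs (s' x)) -> consistent s = consistent s'.
Proof.
move=> eq_Obs; have eq_M : bigM s = bigM s' by apply: eq_bigr => x _.
by rewrite /consistent eq_M; congr (_ && _); apply: eq_forallb => x; rewrite eq_Obs.
Qed.

Definition can_advance n (s : cstateV n) : Prop :=
  exists (i : 'I_n) (l : label) (mu : option (msg n)) (s' : cstateV n)
         (o : option (msg n)),
    valid_input mu /\ comp_step s i l mu = Some (s', o) /\
    (round (s i) < round (s' i))%R.

Lemma init_advance n (s : cstateV n) x Ob :
  consistent s -> s x = Init Ob -> can_advance s.
Proof.
move=> cons_s sx; exists x, Linit, None.
exists (upd s x (Run Ob 0 (if Ob == set0 then Mu else U))), None.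
by rewrite /comp_step sx /= cons_s /upd eqxx.
Qed.

Lemma emit_valid n (s : cstateV n) j Obj rj sj :
  valid_state s -> s j = Run Obj rj sj -> valid_message (j, rj, sj).
Proof.
move=> [o valid_s] sj_; exists (upd s j (s j)).
apply: (vsm_step (mu := None) (i := j) (l := Lemit) valid_s); first by left.
by rewrite /comp_step sj_.
Qed.

Lemma recv_advance n (s : cstateV n) i j Ob r st Obj rj sj Ob2 r2 st2 :
  valid_state s -> s i = Run Ob r st -> s j = Run Obj rj sj ->
  recv Ob r st j rj sj = Some (Run Ob2 r2 st2) -> r < r2 -> can_advance s.
Proof.
move=> valid_s si sj_ Hrecv lt_r.
exists i, Lreceive, (Some (j, rj, sj)), (upd s i (Run Ob2 r2 st2)), None.
split; first exact: emit_valid valid_s sj_.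
rewrite /comp_step si /= Hrecv /phi sj_ eqxx andbT /upd eqxx /= ltz_nat lt_r.
by case: sj {sj_ Hrecv}.
Qed.

(* Induction on the round: an observed child undecided at a smaller round
   advances by the induction hypothesis; otherwise its message advances i. *)
Lemma undecided_advance n (M : {set 'I_n}) (s : cstateV n) i Ob r :
  sound_config M s -> valid_state s -> (forall x, exists Ob r st, s x = Run Ob r st) ->
  s i = Run Ob r U -> can_advance s.
Proof.
move=> sound_s valid_s running; elim/ltn_ind: r i Ob => r IH i Ob si.
have := sound_s i; rewrite si => /andP[/eqP EOb /= Hr]; rewrite EOb in si.
have /set0Pn[j jOb] : M :\ i != set0 by rewrite -card_gt0 (leq_ltn_trans _ Hr).
have [Obj [rj [sj sj_]]] := running j.
have := sound_s j; rewrite sj_ => /andP[_ Hj].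
have [[Esj lt_rj] | le_r] : (sj = U /\ rj < r) \/ (sj = U -> r <= rj).
  by case: sj {sj_ Hj}; [case: ltnP => ?; [left | right] | right | right].
  by apply: (IH rj lt_rj j Obj); rewrite sj_ Esj.
have [r2 [st2 [Hrecv lt_r]]] := recv_undecided_progress Hr jOb Hj le_r.
exact: recv_advance valid_s si sj_ Hrecv lt_r.
Qed.

Theorem mainTheorem4 (n : nat) (hn : 0 < n) (s0 s : cstateV n) :
  initialV s0 -> consistent s0 -> reach s0 s -> ~ in_SF s ->
  exists (i : 'I_n) (l : label) (mu : option (msg n)) (s' : cstateV n)
         (o : option (msg n)),
    valid_input mu /\ comp_step s i l mu = Some (s', o) /\
    (round (s i) < round (s' i))%R.
Proof.
move=> init0 cons0 reach_s not_final.
have [sound_s valid_s] := reach_sound cons0 reach_s.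
case: (pickP (fun x => if s x is Init _ then true else false)) => [x | running].
  case sx: (s x) => [Ob|] // _; apply: init_advance sx.
  have sound_s0 := consistent_sound_config init0 cons0.
  rewrite (consistent_eq_Obs (s' := s0)) // => y.
  by rewrite (sound_config_Obs _ sound_s) (sound_config_Obs _ sound_s0).
have {}running x : exists Ob r st, s x = Run Ob r st.
  by move: (running x); case: (s x) => // Ob r st; exists Ob, r, st.
case: (pickP (fun x => if s x is Run _ _ U then true else false)) => [x | decided].
  case sx: (s x) => [|Ob r []] // _.
  exact: undecided_advance sound_s valid_s running sx.
case: not_final; split=> // x; have [Ob [r [st sx]]] := running x.
by exists Ob, r, st; split=> // Est; move: (decided x); rewrite sx Est.
Qed.
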